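(* Let $\alpha,\beta_1,\beta_2,\gamma_1,\gamma_2\in\widehat{\mathbb{F}_q^\times}$. (i) Suppose $\varepsilon\notin\{\alpha,\beta_2,\beta_1\overline{\gamma_1},\beta_2\overline{\gamma_2}\}$. Then for every $\lambda\in\mathbb{F}_q$, $$F_2\!\left({\alpha;\beta_1,\beta_2\atop\gamma_1,\gamma_2};\lambda,1\right)=\frac{(\overline{\beta_2}\gamma_2)_{\overline{\alpha}}}{(\gamma_2)^\circ_{\overline{\alpha}}}\,{}_3F_2\!\left({\alpha,\beta_1,\alpha\overline{\gamma_2}\atop\gamma_1,\alpha\beta_2\overline{\gamma_2}};\lambda\right).$$ (ii) Suppose $\varepsilon\notin\{\alpha,\beta_1,\beta_2,\beta_1\overline{\gamma_1},\beta_2\overline{\gamma_2}\}$. Then for every $\lambda\in\mathbb{F}_q\setminus\{1\}$, $$F_2\!\left({\alpha;\beta_1,\beta_2\atop\gamma_1,\gamma_2};\lambda,1-\lambda\right)=\frac{(\overline{\beta_2}\gamma_2)_{\overline{\alpha}}}{(\gamma_2)^\circ_{\overline{\alpha}}}\,\overline{\alpha}(1-\lambda)\,{}_3F_2\!\left({\alpha,\overline{\beta_1}\gamma_1,\alpha\overline{\gamma_2}\atop\gamma_1,\alpha\beta_2\overline{\gamma_2}};\frac{\lambda}{\lambda-1}\right).$$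
   Context: $\mathbb{F}_q$ is a finite field with $q$ elements. $\widehat{\mathbb{F}_q^\times}$ is the group of multiplicative characters $\mathbb{F}_q^\times\to\overline{\mathbb{Q}}^\times$, $\varepsilon$ the trivial character; every character (including $\varepsilon$) is extended by $0$ at $0$; $\overline{\eta}=\eta^{-1}$; $\delta(\eta)=1$ if $\eta=\varepsilon$, else $0$. $\psi$ is a fixed non-trivial additive character. $g(\eta)=-\sum_{x\in\mathbb{F}_q^\times}\psi(x)\eta(x)$, $g^\circ(\eta)=q^{\delta(\eta)}g(\eta)$, $(\alpha)_\nu=g(\alpha\nu)/g(\alpha)$, $(\alpha)^\circ_\nu=g^\circ(\alpha\nu)/g^\circ(\alpha)$. For $\lambda\in\mathbb{F}_q$, ${}_3F_2\!\left({\alpha_1,\alpha_2,\alpha_3\atop\beta_1,\beta_2};\lambda\right)=\frac{1}{1-q}\sum_{\nu}\frac{(\alpha_1)_\nu(\alpha_2)_\nu(\alpha_3)_\nu}{(\varepsilon)^\circ_\nu(\beta_1)^\circ_\nu(\beta_2)^\circ_\nu}\nu(\lambda)$; for $x,y\in\mathbb{F}_q$, $F_2\!\left({\alpha;\beta_1,\beta_2\atop\gamma_1,\gamma_2};x,y\right)=\frac{1}{(1-q)^2}\sum_{\nu_1,\nu_2}\frac{(\alpha)_{\nu_1\nu_2}(\beta_1)_{\nu_1}(\beta_2)_{\nu_2}}{(\gamma_1)^\circ_{\nu_1}(\gamma_2)^\circ_{\nu_2}(\varepsilon)^\circ_{\nu_1}(\varepsilon)^\circ_{\nu_2}}\nu_1(x)\nu_2(y)$,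 sums over characters. *)

From HB Require Import structures.
From mathcomp Require Import all_boot all_order all_fingroup all_algebra all_field.
Set Implicit Arguments. Unset Strict Implicit. Unset Printing Implicit Defensive.
Import GRing.Theory Num.Theory.
Local Open Scope ring_scope.

(* Finite-field hypergeometric functions (Greene/Otsubo style normalisation).
   Characters take values in algC (algebraic closure of Q). *)
Section FFHyp.
Variable F : finFieldType.

Lemma qm1_gt0 : (0 < #|F|.-1)%N.
Proof. by rewrite -card_finField_unit; apply/card_gt0P; exists 1%g; rewrite inE. Qed.

Definition omega : algC := sval (C_prim_root_exists qm1_gt0).

(* A multiplicative character F_q^x -> mu_{q-1} is encoded by its exponents
   e(x) with chi(x) = omega^(e x); it is extended by 0 at 0 (e 0 := 0). *)
Definition expchar (e : {ffun F -> 'I_#|F|.-1}) : F -> algC :=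
  fun x => if x == 0 then 0 else omega ^+ e x.

Definition is_charb (e : {ffun F -> 'I_#|F|.-1}) : bool :=
  (val (e 0) == 0%N) &&
  [forall x : F, forall y : F, ((x != 0) && (y != 0)) ==>
     (val (e (x * y)) == ((e x + e y) %% #|F|.-1)%N)].

Record mchar := MChar { mchar_code : {ffun F -> 'I_#|F|.-1};
                        mchar_codeP : is_charb mchar_code }.
HB.instance Definition _ := [isSub for mchar_code].
HB.instance Definition _ := [Finite of mchar by <:].

Definition mchar_fun (c : mchar) : F -> algC := expchar (mchar_code c).
Coercion mchar_fun : mchar >-> Funclass.

Definition cmul (a b : F -> algC) : F -> algC := fun x => a x * b x.
Definition cinv (a : F -> algC) : F -> algC := fun x => (a x)^-1. (* conj; 0^-1 = 0 *)
Definition eps : F -> algC := fun x => (x != 0)%:R.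
Definition deltaC (a : F -> algC) : bool := [forall x, a x == eps x].

Definition is_addchar (psi : F -> algC) : Prop :=
  psi 0 = 1 /\ forall x y, psi (x + y) = psi x * psi y.

Definition qC : algC := #|F|%:R.

Definition gauss (psi : F -> algC) (chi : F -> algC) : algC :=
  - \sum_(x : F | x != 0) psi x * chi x.
Definition gaussC psi chi : algC := qC ^+ deltaC chi * gauss psi chi.
Definition poch psi (a nu : F -> algC) : algC := gauss psi (cmul a nu) / gauss psi a.
Definition pochC psi (a nu : F -> algC) : algC := gaussC psi (cmul a nu) / gaussC psi a.

Definition hyp32 psi (a1 a2 a3 b1 b2 : F -> algC) (lam : F) : algC :=
  (1 - qC)^-1 * \sum_(nu : mchar)
    (poch psi a1 nu * poch psi a2 nu * poch psi a3 nu
      / (pochC psi eps nu * pochC psi b1 nu * pochC psi b2 nu) * nu lam).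

Definition appellF2 psi (a b1 b2 c1 c2 : F -> algC) (x y : F) : algC :=
  ((1 - qC) ^+ 2)^-1 * \sum_(n1 : mchar) \sum_(n2 : mchar)
    (poch psi a (cmul n1 n2) * poch psi b1 n1 * poch psi b2 n2
      / (pochC psi c1 n1 * pochC psi c2 n2 * pochC psi eps n1 * pochC psi eps n2)
      * n1 x * n2 y).

End FFHyp.

From HB Require Import structures.
From mathcomp Require Import all_boot all_order all_fingroup all_algebra all_field.
From mathcomp Require Import cyclic.
From mathcomp.algebra_tactics Require Import ring.
From Stdlib Require Import FunctionalExtensionality.
Import GRing.Theory Num.Theory.
Local Open Scope ring_scope.
Set Implicit Arguments. Unset Strict Implicit. Unset Printing Implicit Defensive.

(* Expanding F2 in its first summation character nu leaves, for each nu, a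
   2F1(al nu, be2; ga2; y).  At y = 1 it is evaluated by the finite-field Gauss
   summation 2F1(a, b; c; 1) = (b^-1 c)_(a^-1) / (c)°_(a^-1), which comes from
   the Euler integral representation of 2F1 (binomial theorem, then Jacobi
   sums).  The reflection formula g(chi) g°(chi^-1) = chi(-1) q rewrites the
   nu-dependence of this value as (al ga2^-1)_nu / (al be2 ga2^-1)°_nu, which
   turns the remaining sum into the 3F2 of (i).  For (ii), expand instead in
   the second character: the Pfaff transformation of the inner 2F1, read off
   the Euler integral under t |-> 1 - t, reduces y = 1 - lam to case (i). *)

Lemma sum_delta (T : finType) (R : pzSemiRingType) (j : T) (f : T -> R) :
  \sum_i (i == j)%:R * f i = f j.
Proof. by rewrite (bigD1 j) //= eqxx mul1r big1 ?addr0 // => i /negbTE ->; rewrite mul0r. Qed.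

Lemma divr_eq1 (R : fieldType) (x y : R) : y != 0 -> (x / y == 1) = (x == y).
Proof. by move=> y0; apply/eqP/eqP => [xy1|->]; [rewrite -(divfK y0 x) xy1 mul1r | rewrite divff]. Qed.

Lemma mulf_fixed_eq0 (R : idomainType) (k x : R) : k != 1 -> x = k * x -> x = 0.
Proof.
move=> k1 /eqP; rewrite -subr_eq0 -{1}[x]mul1r -mulrBl mulf_eq0 subr_eq0 eq_sym.
by rewrite (negbTE k1) => /eqP.
Qed.

(** * Multiplicative characters *)

Section Characters.
Variable F : finFieldType.
Local Notation N := #|F|.-1.
Local Notation om := (omega F).

Lemma omega_prim : N.-primitive_root om.
Proof. exact: svalP (C_prim_root_exists (qm1_gt0 F)). Qed.

Lemma omega_neq0 : om != 0.
Proof. by rewrite (prim_root_eq0 omega_prim) eqn0Ngt qm1_gt0. Qed.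

Lemma mcharE (c : mchar F) x : c x = if x == 0 then 0 else om ^+ mchar_code c x.
Proof. by []. Qed.

Lemma mchar_code0 (c : mchar F) : val (mchar_code c 0) = 0%N.
Proof. by case/andP: (mchar_codeP c) => /eqP. Qed.

Lemma mchar_codeM (c : mchar F) x y : x != 0 -> y != 0 ->
  val (mchar_code c (x * y)) = ((mchar_code c x + mchar_code c y) %% N)%N.
Proof.
move=> x0 y0; case/andP: (mchar_codeP c) => _ /forallP/(_ x)/forallP/(_ y).
by rewrite x0 y0 => /eqP.
Qed.

Lemma mchar0 (c : mchar F) : c 0 = 0.
Proof. by rewrite mcharE eqxx. Qed.

Lemma mchar_eq0 (c : mchar F) x : (c x == 0) = (x == 0).
Proof.
by rewrite mcharE; case: (x =P 0) => _; rewrite ?eqxx // expf_eq0 (negbTE omega_neq0) andbF.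
Qed.

Lemma mcharM (c : mchar F) x y : c (x * y) = c x * c y.
Proof.
have [->|x0] := eqVneq x 0; first by rewrite mul0r mchar0 mul0r.
have [->|y0] := eqVneq y 0; first by rewrite mulr0 mchar0 mulr0.
rewrite !mcharE mulf_eq0 (negbTE x0) (negbTE y0) /= mchar_codeM //.
by rewrite (prim_expr_mod omega_prim) exprD.
Qed.

Lemma mchar1 (c : mchar F) : c 1 = 1.
Proof.
have c1 : c 1 != 0 by rewrite mchar_eq0 oner_eq0.
by apply: (mulfI c1); rewrite -mcharM !mulr1.
Qed.

Lemma mcharV (c : mchar F) x : c x^-1 = (c x)^-1.
Proof.
have [->|x0] := eqVneq x 0; first by rewrite invr0 mchar0 invr0.
have cx : c x != 0 by rewrite mchar_eq0.
by apply: (mulfI cx); rewrite -mcharM !divff ?mchar1.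
Qed.

Lemma mcharN1_sqr (c : mchar F) : c (-1) * c (-1) = 1.
Proof. by rewrite -mcharM mulrNN mulr1 mchar1. Qed.

Lemma mcharN1_inv (c : mchar F) : (c (-1))^-1 = c (-1).
Proof. by rewrite -mcharV invrN invr1. Qed.

Definition ord_mod k : 'I_N := Ordinal (ltn_pmod k (qm1_gt0 F)).

Definition mchar_mul_code (a b : mchar F) : {ffun F -> 'I_N} :=
  [ffun x => ord_mod (mchar_code a x + mchar_code b x)].

Lemma mchar_mul_codeP a b : is_charb (mchar_mul_code a b).
Proof.
apply/andP; split; first by rewrite ffunE /= !mchar_code0 mod0n.
apply/forallP=> x; apply/forallP=> y; apply/implyP=> /andP[x0 y0].
by rewrite !ffunE /= !mchar_codeM // !modnDm addnACA.
Qed.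

Definition mchar_mul a b : mchar F := MChar (mchar_mul_codeP a b).

Definition mchar_inv_code (a : mchar F) : {ffun F -> 'I_N} :=
  [ffun x => ord_mod (mchar_code a x * N.-1)].

Lemma mchar_inv_codeP a : is_charb (mchar_inv_code a).
Proof.
apply/andP; split; first by rewrite ffunE /= mchar_code0 mod0n.
apply/forallP=> x; apply/forallP=> y; apply/implyP=> /andP[x0 y0].
by rewrite !ffunE /= mchar_codeM // modnMml modnDm mulnDl.
Qed.

Definition mchar_inv a : mchar F := MChar (mchar_inv_codeP a).

Definition mchar_one_code : {ffun F -> 'I_N} := [ffun => ord_mod 0].

Lemma mchar_one_codeP : is_charb mchar_one_code.
Proof.
apply/andP; split; first by rewrite ffunE /= mod0n.
by apply/forallP=> x; apply/forallP=> y; apply/implyP=> _; rewrite !ffunE /= !mod0n.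
Qed.

Definition mchar_one : mchar F := MChar mchar_one_codeP.

Lemma mchar_mulE a b x : mchar_mul a b x = a x * b x.
Proof.
rewrite !mcharE; case: eqP => _; first by rewrite mul0r.
by rewrite ffunE /= (prim_expr_mod omega_prim) exprD.
Qed.

Lemma mchar_invE a x : mchar_inv a x = (a x)^-1.
Proof.
rewrite !mcharE; case: eqP => _; first by rewrite invr0.
rewrite ffunE /= (prim_expr_mod omega_prim).
have omk : om ^+ mchar_code a x != 0 by rewrite expf_neq0 ?omega_neq0.
apply: (mulIf omk); rewrite mulVf // -exprD -mulnSr prednK ?qm1_gt0 //.
by rewrite mulnC exprM (prim_expr_order omega_prim) expr1n.
Qed.

Lemma mchar_oneE x : mchar_one x = (x != 0)%:R.
Proof. by rewrite mcharE; case: eqP => _; rewrite // ffunE /= mod0n. Qed.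

Lemma mchar_mul_cmul a b : mchar_fun (mchar_mul a b) = cmul a b.
Proof. by apply: functional_extensionality => x; rewrite mchar_mulE. Qed.

Lemma mchar_inv_cinv a : mchar_fun (mchar_inv a) = cinv a.
Proof. by apply: functional_extensionality => x; rewrite mchar_invE. Qed.

Lemma mchar_one_eps : mchar_fun mchar_one = @eps F.
Proof. by apply: functional_extensionality => x; rewrite mchar_oneE. Qed.

Lemma mchar_ext (a b : mchar F) : (forall x, x != 0 -> a x = b x) -> a = b.
Proof.
move=> eq_ab; apply/val_inj/ffunP => x; apply: val_inj.
have [->|x0] := eqVneq x 0; first by rewrite !mchar_code0.
move: (eq_ab x x0); rewrite !mcharE (negbTE x0) => /eqP.
by rewrite (eq_prim_root_expr omega_prim) !modn_small // => /eqP.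
Qed.

Lemma deltaC_mchar (c : mchar F) : deltaC c = (c == mchar_one).
Proof.
apply/forallP/eqP => [c1|-> x]; last by rewrite mchar_one_eps.
by apply: mchar_ext => x _; rewrite (eqP (c1 x)) mchar_one_eps.
Qed.

Lemma mchar_neq1_exists (c : mchar F) : c != mchar_one -> exists2 x, x != 0 & c x != 1.
Proof.
move=> c1; apply/exists_inP; apply: contraR c1 => /exists_inPn c_triv.
by apply/eqP/mchar_ext => x x0; rewrite mchar_oneE x0; apply/eqP/negbNE/c_triv.
Qed.

Lemma sum_mchar (c : mchar F) : \sum_x c x = (c == mchar_one)%:R * N%:R.
Proof.
have [->|/mchar_neq1_exists[y y0 cy]] := eqVneq c mchar_one.
  rewrite mul1r (eq_bigr (fun x => (x != 0)%:R)) => [|x _]; last exact: mchar_oneE.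
  by rewrite -natr_sum -(cardC1 0) -sum1_card [in RHS]big_mkcond.
rewrite mul0r; apply: (mulf_fixed_eq0 cy).
by rewrite [LHS](reindex_inj (mulfI y0)) mulr_sumr; apply: eq_bigr => x _; rewrite mcharM.
Qed.

Lemma mchar_mul_inj (a : mchar F) : injective (mchar_mul a).
Proof.
move=> b c /(congr1 (fun d : mchar F => mchar_fun d)) eq_ab; apply: mchar_ext => x x0.
have ax : a x != 0 by rewrite mchar_eq0.
by apply: (mulfI ax); rewrite -!mchar_mulE eq_ab.
Qed.

Lemma expf_pred_card (x : F) : x != 0 -> x ^+ N = 1.
Proof.
move=> x0; apply: (mulIf x0).
by rewrite mul1r -exprSr prednK ?expf_card // ltnW ?finNzRing_gt1.
Qed.

Lemma finField_prim_root : exists w : F, N.-primitive_root w.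
Proof.
have /hasP[w _ wp] : has N.-primitive_root (enum [pred x : F | x != 0]).
  apply: has_prim_root; first exact: qm1_gt0.
  - by apply/allP => x; rewrite mem_enum unity_rootE => x0; apply/eqP/expf_pred_card.
  - exact: enum_uniq.
  - by rewrite -cardE -(cardC1 0).
by exists w.
Qed.

(* The discrete logarithm to a generator of F^x is a faithful character. *)
Lemma mchar_separates (z : F) : z != 0 -> z != 1 -> exists c : mchar F, c z != 1.
Proof.
move=> z0 z1; have [w wp] := finField_prim_root.
pose dlog x : 'I_N := odflt (ord_mod 0) [pick i : 'I_N | w ^+ i == x].
have dlogK x : x != 0 -> w ^+ dlog x = x.
  move=> x0; rewrite /dlog; case: pickP => [i /eqP //|no_i].
  by have [i /esym/eqP] := prim_rootP wp (expf_pred_card x0); rewrite no_i.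
have dlog0 : val (dlog 0) = 0%N.
  rewrite /dlog; case: pickP => [i|_]; last exact: mod0n.
  by rewrite expf_eq0 (prim_root_eq0 wp) eqn0Ngt qm1_gt0 andbF.
have dlogP : is_charb [ffun x => dlog x].
  apply/andP; split; first by rewrite ffunE dlog0.
  apply/forallP=> x; apply/forallP=> y; apply/implyP=> /andP[x0 y0].
  rewrite !ffunE -[X in X == _](modn_small (ltn_ord (dlog (x * y)))).
  by rewrite -(eq_prim_root_expr wp) exprD !dlogK ?mulf_neq0.
exists (MChar dlogP); rewrite mcharE (negbTE z0) ffunE /= -(expr0 om).
rewrite (eq_prim_root_expr omega_prim) mod0n (modn_small (ltn_ord _)).
by apply: contra z1 => /eqP dz; rewrite -(dlogK z z0) dz expr0.
Qed.

Lemma sum_mchar_at_card (z : F) :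
  \sum_(c : mchar F) c z = (z == 1)%:R * #|{: mchar F}|%:R.
Proof.
have [->|z1] := eqVneq z 1.
  by rewrite mul1r (eq_bigr (fun _ => 1)) ?sumr_const // => c _; rewrite mchar1.
have [->|z0] := eqVneq z 0; first by rewrite mul0r big1 // => c _; rewrite mchar0.
have [c cz] := mchar_separates z0 z1; rewrite mul0r; apply: (mulf_fixed_eq0 cz).
rewrite [LHS](reindex_inj (@mchar_mul_inj c)) mulr_sumr.
by apply: eq_bigr => d _; rewrite mchar_mulE.
Qed.

Lemma card_mchar : #|{: mchar F}|%:R = N%:R :> algC.
Proof.
have : \sum_(z : F) \sum_(c : mchar F) c z = \sum_(c : mchar F) \sum_(z : F) c z.
  exact: exchange_big.
rewrite (eq_bigr _ (fun z _ => sum_mchar_at_card z)) sum_delta.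
by rewrite (eq_bigr _ (fun c _ => sum_mchar c)) sum_delta.
Qed.

Lemma sum_mchar_at (z : F) : \sum_(c : mchar F) c z = (z == 1)%:R * N%:R.
Proof. by rewrite sum_mchar_at_card card_mchar. Qed.

Lemma qC_neq0 : qC F != 0.
Proof. by rewrite pnatr_eq0 -lt0n ltnW ?finNzRing_gt1. Qed.

Lemma natr_qm1 : N%:R = qC F - 1 :> algC.
Proof.
by rewrite /qC -[#|F| in RHS](prednK (ltnW (finNzRing_gt1 F))) mulrSr addrK.
Qed.

Lemma subq_neq0 : 1 - qC F != 0.
Proof. by rewrite subr_eq0 eq_sym pnatr_eq1 gtn_eqF ?finNzRing_gt1. Qed.

End Characters.

Notation "a \cdot b" := (mchar_mul a b) (at level 40, left associativity).
Notation "a \^-1" := (mchar_inv a) (at level 3, left associativity, format "a \^-1").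

Ltac mchar_field :=
  let x := fresh "x" in let x0 := fresh "x0" in
  apply: mchar_ext => x x0; rewrite ?(mchar_mulE, mchar_invE, mchar_oneE) ?x0 /=;
  field; rewrite ?mchar_eq0 ?x0 //.

Section CharacterGroup.
Variable F : finFieldType.
Implicit Types a b c : mchar F.

Lemma mchar_mulA a b c : a \cdot (b \cdot c) = a \cdot b \cdot c.
Proof. mchar_field. Qed.

Lemma mchar_mulC a b : a \cdot b = b \cdot a.
Proof. mchar_field. Qed.

Lemma mchar_mul1 a : mchar_one F \cdot a = a.
Proof. mchar_field. Qed.

Lemma mchar_invK a : a\^-1\^-1 = a.
Proof. mchar_field. Qed.

Lemma mchar_inv1 : (mchar_one F)\^-1 = mchar_one F.
Proof. mchar_field. Qed.

Lemma mchar_mul_eq1 a b : a \cdot b = mchar_one F -> a = b\^-1.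
Proof.
move=> ab1; apply: mchar_ext => x x0.
have /= := congr1 (fun c => mchar_fun c x) ab1; rewrite mchar_mulE mchar_oneE x0 mchar_invE.
have bx : b x != 0 by rewrite mchar_eq0.
by move=> abx; apply: (mulIf bx); rewrite abx mulVf.
Qed.

Lemma mchar_div_eq1 a b : (a \cdot b\^-1 == mchar_one F) = (a == b).
Proof.
apply/eqP/eqP => [/mchar_mul_eq1 ->|->]; first exact: mchar_invK.
mchar_field.
Qed.

Lemma mchar_mul_eqr a b : (a \cdot b == b) = (a == mchar_one F).
Proof.
apply/eqP/eqP => [ab|->]; last exact: mchar_mul1.
by apply: (@mchar_mul_inj _ b); rewrite mchar_mulC ab mchar_mulC mchar_mul1.
Qed.

Lemma deltaC_div a b : deltaC (cmul a (cinv b)) = (a == b).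
Proof. by rewrite -mchar_inv_cinv -mchar_mul_cmul deltaC_mchar mchar_div_eq1. Qed.

Lemma mcharN1_neq0 c : c (-1) != 0.
Proof. by rewrite mchar_eq0 oppr_eq0 oner_eq0. Qed.

End CharacterGroup.

(** * Gauss and Jacobi sums *)

Section GaussSums.
Variables (F : finFieldType) (psi : F -> algC).
Hypothesis psi_add : is_addchar psi.
Hypothesis psi_nontriv : exists x : F, psi x != 1.
Local Notation N := #|F|.-1.
Local Notation q := (qC F).
Local Notation g c := (gauss psi (mchar_fun c)).
Local Notation gC c := (gaussC psi (mchar_fun c)).

Lemma addchar0 : psi 0 = 1. Proof. by case: psi_add. Qed.
Lemma addcharD x y : psi (x + y) = psi x * psi y. Proof. by case: psi_add. Qed.

Lemma sum_addchar : \sum_x psi x = 0.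
Proof.
have [y psiy] := psi_nontriv; apply: (mulf_fixed_eq0 psiy).
by rewrite [LHS](reindex_inj (addrI y)) mulr_sumr; apply: eq_bigr => x _; rewrite addcharD.
Qed.

Lemma sum_addcharM u : \sum_x psi (u * x) = (u == 0)%:R * q.
Proof.
have [->|u0] := eqVneq u 0.
  by rewrite mul1r (eq_bigr (fun _ => 1)) ?sumr_const // => x _; rewrite mul0r addchar0.
by rewrite mul0r -[RHS]sum_addchar [RHS](reindex_inj (mulfI u0)).
Qed.

Lemma gaussE (c : mchar F) : g c = - \sum_x psi x * c x.
Proof. by rewrite [in RHS](bigD1 0) //= mchar0 mulr0 add0r. Qed.

Lemma sum_addcharM_mchar (c : mchar F) u : u != 0 ->
  \sum_x psi (u * x) * c x = - (c u)^-1 * g c.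
Proof.
move=> u0; rewrite gaussE mulrN mulNr opprK mulr_sumr.
rewrite [LHS](reindex_inj (mulfI (invr_neq0 u0))).
by apply: eq_bigr => x _; rewrite mulrA divff // mul1r mcharM mcharV mulrCA.
Qed.

Lemma gauss_one : g (mchar_one F) = 1.
Proof.
rewrite /gauss (eq_bigr psi) => [|x x0]; last by rewrite mchar_oneE x0 mulr1.
have := sum_addchar; rewrite (bigD1 0) //= addchar0 => /eqP.
by rewrite addrC addr_eq0 => /eqP ->; rewrite opprK.
Qed.

Lemma gauss_mul_inv (c : mchar F) : c != mchar_one F -> g c * g c\^-1 = c (-1) * q.
Proof.
move=> c1.
have inner y : (\sum_x psi x * c x) * (psi y * c\^-1 y) = \sum_t psi ((t + 1) * y) * c t.
  have [->|y0] := eqVneq y 0.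
    rewrite mchar0 !mulr0 (eq_bigr c) ?sum_mchar ?(negbTE c1) ?mul0r // => t _.
    by rewrite mulr0 addchar0 mul1r.
  rewrite mulr_suml [LHS](reindex_inj (mulfI y0)); apply: eq_bigr => t _.
  rewrite mchar_invE mcharM mulrDl mul1r [t * y]mulrC addcharD.
  by field; rewrite mchar_eq0.
rewrite !gaussE mulrNN mulr_sumr (eq_bigr _ (fun y _ => inner y)) exchange_big /=.
rewrite (eq_bigr (fun t => (t == -1)%:R * (c t * q))) ?sum_delta // => t _.
by rewrite -mulr_suml sum_addcharM addr_eq0; ring.
Qed.

Definition jacobi (X Y : mchar F) : algC := \sum_t X t * Y (1 - t).

Lemma jacobiC (X Y : mchar F) : jacobi X Y = jacobi Y X.
Proof.
rewrite /jacobi [LHS](reindex_inj (can_inj (subKr 1))).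
by apply: eq_bigr => t _; rewrite subKr mulrC.
Qed.

Lemma jacobi_scale (X Y : mchar F) (u : F) : u != 0 ->
  \sum_x X x * Y (u - x) = (X \cdot Y) u * jacobi X Y.
Proof.
move=> u0; rewrite /jacobi mulr_sumr [LHS](reindex_inj (mulfI u0)); apply: eq_bigr => t _.
by rewrite -[u in u - _]mulr1 -mulrBr !mcharM mchar_mulE; ring.
Qed.

Lemma gauss_mul (X Y : mchar F) :
  g X * g Y = - g (X \cdot Y) * jacobi X Y + (X \cdot Y == mchar_one F)%:R * N%:R * Y (-1).
Proof.
have shift x : psi x * X x * \sum_y psi y * Y y = \sum_u psi u * (X x * Y (u - x)).
  rewrite mulr_sumr [RHS](reindex_inj (addIr x)); apply: eq_bigr => y _ /=.
  by rewrite addrK addcharD; ring.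
rewrite (gaussE X) (gaussE Y) mulrNN mulr_suml (eq_bigr _ (fun x _ => shift x)) exchange_big /=.
rewrite (bigD1 0) //= addchar0 addrC; congr (_ + _).
  rewrite /gauss opprK mulr_suml; apply: eq_bigr => u u0.
  by rewrite -mulr_sumr jacobi_scale // mulrA.
rewrite (eq_bigr (fun x => Y (-1) * (X \cdot Y) x)) => [|x _]; last first.
  by rewrite sub0r -[- x]mulN1r mcharM mchar_mulE; ring.
by rewrite -mulr_sumr sum_mchar mulrC.
Qed.

Lemma gaussC_one : gC (mchar_one F) = q.
Proof. by rewrite /gaussC deltaC_mchar eqxx gauss_one mulr1. Qed.

Lemma gaussC_neq1 (c : mchar F) : c != mchar_one F -> gC c = g c.
Proof. by move=> c1; rewrite /gaussC deltaC_mchar (negbTE c1) /= expr0 mul1r. Qed.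

Lemma jacobi_gaussC (X Y : mchar F) : Y != mchar_one F ->
  jacobi X Y * gC (X \cdot Y) = - (g X * g Y).
Proof.
move=> Y1; have := gauss_mul X Y.
have [XY1|XY1] := eqVneq (X \cdot Y) (mchar_one F); last first.
  by rewrite gaussC_neq1 // => ->; rewrite mulr0n !mul0r addr0; ring.
have gXY : g X * g Y = Y (-1) * q by rewrite (mchar_mul_eq1 XY1) mulrC gauss_mul_inv.
rewrite XY1 gauss_one gaussC_one gXY natr_qm1 mulr1n => eJ.
have -> : jacobi X Y = - Y (-1) by apply: (addrI (Y (-1) * q)); rewrite {1}eJ; ring.
by rewrite mulNr.
Qed.

Lemma gaussC_mul_inv (c : mchar F) : gC c * g c\^-1 = c (-1) * q.
Proof.
have [->|c1] := eqVneq c (mchar_one F); last by rewrite gaussC_neq1 // gauss_mul_inv.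
by rewrite gaussC_one mchar_inv1 gauss_one mchar_oneE oppr_eq0 oner_eq0 mulr1 mul1r.
Qed.

Lemma gaussC_neq0 (c : mchar F) : gC c != 0.
Proof.
have : gC c * g c\^-1 != 0 by rewrite gaussC_mul_inv mulf_neq0 ?mcharN1_neq0 ?qC_neq0.
by rewrite mulf_eq0 negb_or => /andP[].
Qed.

Lemma gauss_neq0 (c : mchar F) : g c != 0.
Proof.
have : gC c\^-1 * g c != 0.
  by rewrite -{2}[c]mchar_invK gaussC_mul_inv mulf_neq0 ?mcharN1_neq0 ?qC_neq0.
by rewrite mulf_eq0 negb_or => /andP[].
Qed.

Lemma gauss_inv (c : mchar F) : g c\^-1 = c (-1) * q / gC c.
Proof. by rewrite -gaussC_mul_inv mulrAC divff ?gaussC_neq0 ?mul1r. Qed.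

Lemma gaussC_inv (c : mchar F) : gC c\^-1 = c (-1) * q / g c.
Proof.
have := gaussC_mul_inv c\^-1; rewrite mchar_invK mchar_invE mcharN1_inv => <-.
by rewrite mulfK ?gauss_neq0.
Qed.

Lemma pochE (a n : mchar F) : poch psi a n = g (a \cdot n) / g a.
Proof. by rewrite /poch /pochC -mchar_mul_cmul. Qed.

Lemma pochCE (a n : mchar F) : pochC psi a n = gC (a \cdot n) / gC a.
Proof. by rewrite /poch /pochC -mchar_mul_cmul. Qed.

Lemma pochC_eps (n : mchar F) : pochC psi (@eps F) n = gC n / q.
Proof. by rewrite -mchar_one_eps pochCE mchar_mul1 gaussC_one. Qed.

Lemma inv_pochC_eps (n : mchar F) : (pochC psi (@eps F) n)^-1 = n (-1) * g n\^-1.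
Proof. by rewrite pochC_eps invf_div gauss_inv !mulrA mcharN1_sqr mul1r. Qed.

Lemma poch_mul (a m n : mchar F) :
  poch psi a (m \cdot n) = poch psi a m * poch psi (a \cdot m) n.
Proof. by rewrite !pochE mchar_mulA [RHS]mulrC mulrA divfK ?gauss_neq0. Qed.

(* [field] would unfold Gauss sums into character sums, so they are first
   abstracted, together with the facts that they do not vanish. *)
Ltac gauss_field :=
  repeat match goal with
  | |- context [gauss psi (mchar_fun ?c)] =>
      let G := fresh "G" in
      have := gauss_neq0 c; set G := gauss psi (mchar_fun c); clearbody G
  | |- context [gaussC psi (mchar_fun ?c)] =>
      let G := fresh "G" in
      have := gaussC_neq0 c; set G := gaussC psi (mchar_fun c); clearbody G
  end;
  have := subq_neq0 F; have := qC_neq0 F;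
  let Q := fresh "Q" in set Q := qC F; clearbody Q; move=> *;
  field; rewrite ?mchar_eq0 ?oppr_eq0 ?oner_eq0 /=; repeat (apply/andP; split); try done.

(** * Hypergeometric sums *)

Definition binomial_sum (a : mchar F) (u : F) : algC :=
  \sum_(n : mchar F) poch psi a n / pochC psi (@eps F) n * n u.

Lemma binomial_sum_orth (a : mchar F) (u : F) : u != 0 ->
  binomial_sum a u = N%:R / g a * \sum_x psi ((1 - u) * x) * a x.
Proof.
move=> u0.
have term (n : mchar F) : poch psi a n / pochC psi (@eps F) n * n u
    = (g a)^-1 * \sum_x \sum_y psi x * a x * psi y * n (x / y * - u).
  have -> : \sum_x \sum_y psi x * a x * psi y * n (x / y * - u)
      = (\sum_x psi x * (a \cdot n) x) * (\sum_y psi y * n\^-1 y) * (n (-1) * n u).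
    rewrite !mulr_suml; apply: eq_bigr => x _; rewrite mulr_sumr mulr_suml.
    apply: eq_bigr => y _; rewrite -[- u]mulN1r !mcharM mcharV mchar_mulE mchar_invE.
    ring.
  by rewrite pochE inv_pochC_eps (gaussE (a \cdot n)) (gaussE n\^-1); ring.
have inner x : \sum_(n : mchar F) \sum_y psi x * a x * psi y * n (x / y * - u)
    = N%:R * (psi ((1 - u) * x) * a x).
  have [->|x0] := eqVneq x 0.
    by rewrite mchar0 !mulr0 big1 // => n _; rewrite big1 // => y _; rewrite !(mulr0, mul0r).
  rewrite exchange_big (eq_bigr (fun y => (y == - u * x)%:R * (N%:R * (psi x * a x * psi y)))).
    by rewrite sum_delta mulrBl mul1r addcharD mulNr; ring.
  move=> y _; rewrite -mulr_sumr sum_mchar_at.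
  have -> : (x / y * - u == 1) = (y == - u * x).
    have [->|y0] := eqVneq y 0; last by rewrite mulrAC [x * _]mulrC divr_eq1 // eq_sym.
    by rewrite invr0 mulr0 mul0r eq_sym oner_eq0 eq_sym mulf_eq0 oppr_eq0 (negbTE u0) (negbTE x0).
  ring.
rewrite /binomial_sum (eq_bigr _ (fun n _ => term n)) -mulr_sumr exchange_big /=.
by rewrite (eq_bigr _ (fun x _ => inner x)) -mulr_sumr mulrCA mulrA.
Qed.

Lemma binomial_sum_neq1 (a : mchar F) (u : F) : u != 0 -> u != 1 ->
  binomial_sum a u = (1 - q) * (a (1 - u))^-1.
Proof.
move=> u0 u1; rewrite binomial_sum_orth // sum_addcharM_mchar ?subr_eq0 1?eq_sym //.
by rewrite natr_qm1; gauss_field; rewrite subr_eq0 eq_sym.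
Qed.

Lemma binomial_sum0 (a : mchar F) : binomial_sum a 0 = 0.
Proof. by rewrite /binomial_sum big1 // => n _; rewrite mchar0 mulr0. Qed.

Lemma binomial_sum1 (a : mchar F) : binomial_sum a 1 = (a == mchar_one F)%:R * N%:R ^+ 2.
Proof.
rewrite binomial_sum_orth ?oner_neq0 // subrr (eq_bigr a) => [|x _]; last first.
  by rewrite mul0r addchar0 mul1r.
rewrite sum_mchar; have [->|_] := eqVneq a (mchar_one F); last by rewrite !mulr0n !mul0r mulr0.
by rewrite gauss_one !mulr1n divr1 mul1r mul1r.
Qed.

Definition hyp21 (a b c : F -> algC) (x : F) : algC :=
  (1 - q)^-1 * \sum_(nu : mchar F)
    (poch psi a nu * poch psi b nu / (pochC psi (@eps F) nu * pochC psi c nu) * nu x).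

(* Analogue of Euler's integral of B(t) C(1 - t) (1 - x t)^(-a), the binomial
   sum playing the role of (1 - u)^(-a). *)
Definition euler_sum (a B C : mchar F) (x : F) : algC :=
  \sum_t B t * C (1 - t) * binomial_sum a (x * t).

Lemma euler_sum_jacobi (a B C : mchar F) x : euler_sum a B C x =
  \sum_(n : mchar F) poch psi a n / pochC psi (@eps F) n * n x * jacobi (B \cdot n) C.
Proof.
rewrite /euler_sum (eq_bigr _ (fun t _ => mulr_sumr _ _ _ _)) exchange_big /=.
apply: eq_bigr => n _; rewrite /jacobi mulr_sumr; apply: eq_bigr => t _.
by rewrite mchar_mulE mcharM; ring.
Qed.

Lemma hyp21_euler (a b c : mchar F) x : b != c ->
  hyp21 a b c x =
  - gC c / ((1 - q) * g b * g (b\^-1 \cdot c)) * euler_sum a b (b\^-1 \cdot c) x.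
Proof.
move=> bc; have Y1 : b\^-1 \cdot c != mchar_one F by rewrite mchar_mulC mchar_div_eq1 eq_sym.
have J n : jacobi (b \cdot n) (b\^-1 \cdot c) = - (g (b \cdot n) * g (b\^-1 \cdot c)) / gC (c \cdot n).
  rewrite -(jacobi_gaussC _ Y1) (_ : b \cdot n \cdot (b\^-1 \cdot c) = c \cdot n).
    by rewrite mulfK ?gaussC_neq0.
  mchar_field.
rewrite euler_sum_jacobi /hyp21 !mulr_sumr; apply: eq_bigr => n _.
by rewrite J !pochE !pochCE pochC_eps; gauss_field.
Qed.

Definition euler_kernel (a B C : mchar F) (x : F) : algC :=
  \sum_t B t * C (1 - t) * (a (1 - x * t))^-1.

Lemma euler_sum_kernel (a B C : mchar F) (z : F) : z != 0 ->
  euler_sum a B C z =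
  (1 - q) * euler_kernel a B C z + B z^-1 * C (1 - z^-1) * binomial_sum a 1.
Proof.
move=> z0; rewrite /euler_sum /euler_kernel (bigD1 z^-1) //= [in RHS](bigD1 z^-1) //=.
rewrite divff // subrr mchar0 invr0 mulr0 add0r addrC; congr (_ + _).
rewrite mulr_sumr; apply: eq_bigr => t tz; have [->|t0] := eqVneq t 0.
  by rewrite !mchar0 !mul0r mulr0.
rewrite binomial_sum_neq1 ?mulf_neq0 //; first by ring.
by apply: contra tz => /eqP zt1; rewrite -(mulKf z0 t) zt1 mulr1.
Qed.

Lemma euler_kernel_pfaff (a B C : mchar F) x : x != 1 ->
  euler_kernel a B C x = (a (1 - x))^-1 * euler_kernel a C B (x / (x - 1)).
Proof.
move=> x1; have x10 : x - 1 != 0 by rewrite subr_eq0.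
rewrite /euler_kernel mulr_sumr [LHS](reindex_inj (can_inj (subKr 1))).
apply: eq_bigr => s _; rewrite subKr.
have -> : 1 - x * (1 - s) = (1 - x) * (1 - x / (x - 1) * s) by field.
by rewrite mcharM invfM; ring.
Qed.

Lemma euler_sum_pfaff (a B C : mchar F) x : x != 1 ->
  euler_sum a B C x = (a (1 - x))^-1 * euler_sum a C B (x / (x - 1)).
Proof.
move=> x1; have x10 : x - 1 != 0 by rewrite subr_eq0.
have [->|x0] := eqVneq x 0.
  by rewrite mul0r /euler_sum !big1 ?mulr0 // => t _; rewrite mul0r binomial_sum0 mulr0.
have a1x : a (1 - x) != 0 by rewrite mchar_eq0 subr_eq0 eq_sym.
rewrite !euler_sum_kernel ?mulf_neq0 ?invr_neq0 // euler_kernel_pfaff //.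
have -> : (x / (x - 1))^-1 = 1 - x^-1 by field; rewrite x0 x10.
rewrite subKr mulrDr mulrCA; congr (_ + _).
rewrite binomial_sum1; have [->|_] := eqVneq a (mchar_one F); last by rewrite !mulr0n !mul0r !mulr0.
by rewrite mchar_oneE subr_eq0 eq_sym x1 !mulr1n invr1; ring.
Qed.

Lemma hyp21_pfaff (a b c : mchar F) x : b != mchar_one F -> b != c -> x != 1 ->
  hyp21 a b c x = (a (1 - x))^-1 * hyp21 a (b\^-1 \cdot c) c (x / (x - 1)).
Proof.
move=> b1 bc x1; have b'c : b\^-1 \cdot c != c.
  by rewrite mchar_mul_eqr -[b\^-1]mchar_mul1 mchar_div_eq1 eq_sym.
rewrite hyp21_euler // hyp21_euler // euler_sum_pfaff //.
rewrite (_ : (b\^-1 \cdot c)\^-1 \cdot c = b); last by mchar_field.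
by rewrite [_ * _ * g b]mulrAC mulrCA.
Qed.

Lemma hyp21_gauss (a b c : mchar F) : b != mchar_one F -> b != c ->
  hyp21 a b c 1 = poch psi (b\^-1 \cdot c) a\^-1 / pochC psi c a\^-1.
Proof.
move=> b1 bc; set Z := b\^-1 \cdot c \cdot a\^-1.
have E : euler_sum a b (b\^-1 \cdot c) 1 = (1 - q) * jacobi b Z.
  rewrite euler_sum_kernel ?oner_neq0 // invr1 subrr mchar0 mulr0 mul0r addr0.
  congr (_ * _); apply: eq_bigr => t _.
  by rewrite mul1r /Z !mchar_mulE !mchar_invE; ring.
have J : jacobi b Z = - (g Z * g b) / gC (c \cdot a\^-1).
  rewrite jacobiC -(jacobi_gaussC _ b1) (_ : Z \cdot b = c \cdot a\^-1).
    by rewrite mulfK ?gaussC_neq0.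
  by rewrite /Z; mchar_field.
by rewrite hyp21_euler // E J !pochE !pochCE; gauss_field.
Qed.

Lemma poch_ratio_inv_shift (a b c n : mchar F) :
  poch psi (b\^-1 \cdot c) (a \cdot n)\^-1 / pochC psi c (a \cdot n)\^-1 =
  poch psi (b\^-1 \cdot c) a\^-1 / pochC psi c a\^-1
  * (poch psi (a \cdot c\^-1) n / pochC psi (a \cdot b \cdot c\^-1) n).
Proof.
rewrite !pochE !pochCE.
rewrite (_ : b\^-1 \cdot c \cdot (a \cdot n)\^-1 = (a \cdot b \cdot c\^-1 \cdot n)\^-1);
  last by mchar_field.
rewrite (_ : c \cdot (a \cdot n)\^-1 = (a \cdot c\^-1 \cdot n)\^-1); last by mchar_field.
rewrite (_ : b\^-1 \cdot c \cdot a\^-1 = (a \cdot b \cdot c\^-1)\^-1); last by mchar_field.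
rewrite (_ : c \cdot a\^-1 = (a \cdot c\^-1)\^-1); last by mchar_field.
rewrite !gauss_inv !gaussC_inv !mchar_mulE !mchar_invE !mcharN1_inv.
by gauss_field.
Qed.

Lemma appellF2C (a b1 b2 c1 c2 : F -> algC) x y :
  appellF2 psi a b1 b2 c1 c2 x y = appellF2 psi a b2 b1 c2 c1 y x.
Proof.
rewrite /appellF2 exchange_big; congr (_ * _); apply: eq_bigr => n2 _.
apply: eq_bigr => n1 _; rewrite -!mchar_mul_cmul mchar_mulC !invfM; ring.
Qed.

Lemma appellF2_split (a : mchar F) (b1 b2 c1 c2 : F -> algC) x y :
  appellF2 psi a b1 b2 c1 c2 x y = (1 - q)^-1 * \sum_(n : mchar F)
    (poch psi a n * poch psi b1 n / (pochC psi (@eps F) n * pochC psi c1 n) * n x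
     * hyp21 (a \cdot n) b2 c2 y).
Proof.
rewrite /appellF2 /hyp21 expr2 invfM -mulrA; congr (_ * _); rewrite mulr_sumr.
apply: eq_bigr => n1 _; rewrite !mulr_sumr; apply: eq_bigr => n2 _.
by rewrite -mchar_mul_cmul poch_mul !invfM; ring.
Qed.

Lemma appellF2_y1 (al b1 b2 g1 g2 : mchar F) lam :
  b2 != mchar_one F -> b2 != g2 ->
  appellF2 psi al b1 b2 g1 g2 lam 1 =
  poch psi (b2\^-1 \cdot g2) al\^-1 / pochC psi g2 al\^-1
  * hyp32 psi al b1 (al \cdot g2\^-1) g1 (al \cdot b2 \cdot g2\^-1) lam.
Proof.
move=> b21 b2g2; rewrite appellF2_split /hyp32 mulrCA; congr (_ * _); rewrite mulr_sumr.
apply: eq_bigr => n _; rewrite hyp21_gauss // poch_ratio_inv_shift !invfM; ring.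
Qed.

Lemma appellF2_pfaff (al b1 b2 g1 g2 : mchar F) lam :
  b1 != mchar_one F -> b1 != g1 -> lam != 1 ->
  appellF2 psi al b1 b2 g1 g2 lam (1 - lam) =
  (al (1 - lam))^-1 * appellF2 psi al (b1\^-1 \cdot g1) b2 g1 g2 (lam / (lam - 1)) 1.
Proof.
move=> b11 b1g1 lam1.
rewrite appellF2C appellF2_split [in RHS]appellF2C appellF2_split mulrCA.
congr (_ * _); rewrite mulr_sumr; apply: eq_bigr => n _.
rewrite hyp21_pfaff // mchar1 mulr1 mchar_mulE.
move: (poch psi al n * poch psi b2 n / (pochC psi (@eps F) n * pochC psi g2 n)) => T.
move: (hyp21 (al \cdot n) (b1\^-1 \cdot g1) g1 (lam / (lam - 1))) => H.
by field; rewrite !mchar_eq0 subr_eq0 eq_sym lam1.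
Qed.

End GaussSums.

Unset Implicit Arguments.

Theorem theorem3p13 (F : finFieldType) (psi : F -> algC)
  (Hpsi : is_addchar psi) (Hpsi_nt : exists x : F, psi x != 1)
  (al be1 be2 ga1 ga2 : mchar F) :
  ((~~ deltaC al /\ ~~ deltaC be2 /\ ~~ deltaC (cmul be1 (cinv ga1))
     /\ ~~ deltaC (cmul be2 (cinv ga2))) ->
   forall lam : F,
     appellF2 psi al be1 be2 ga1 ga2 lam 1 =
     poch psi (cmul (cinv be2) ga2) (cinv al) / pochC psi ga2 (cinv al)
     * hyp32 psi al be1 (cmul al (cinv ga2)) ga1
             (cmul (cmul al be2) (cinv ga2)) lam)
  /\
  ((~~ deltaC al /\ ~~ deltaC be1 /\ ~~ deltaC be2
     /\ ~~ deltaC (cmul be1 (cinv ga1)) /\ ~~ deltaC (cmul be2 (cinv ga2))) ->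
   forall lam : F, lam != 1 ->
     appellF2 psi al be1 be2 ga1 ga2 lam (1 - lam) =
     poch psi (cmul (cinv be2) ga2) (cinv al) / pochC psi ga2 (cinv al)
     * cinv al (1 - lam)
     * hyp32 psi al (cmul (cinv be1) ga1) (cmul al (cinv ga2)) ga1
             (cmul (cmul al be2) (cinv ga2)) (lam / (lam - 1))).
Proof.
rewrite !deltaC_div !deltaC_mchar -!mchar_inv_cinv -!mchar_mul_cmul.
split=> [[_ [be21 [_ be2ga2]]] lam | [_ [be11 [be21 [be1ga1 be2ga2]]]] lam lam1].
  exact: appellF2_y1.
by rewrite appellF2_pfaff // appellF2_y1 // mchar_invE mulrCA mulrA.
Qed.
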